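(* Let $B_1,B_2>0$, $\mathcal{W}=\{\mathbf{w}\in\mathbb{R}^d\colon\|\mathbf{w}\|<B_1\}$ and $\mathcal{X}=\{\mathbf{x}\in\mathbb{R}^d\colon\|\mathbf{x}\|\le B_2\}$, and let $\rho\in[0,1]$. Consider the function classes (dropout outputs of a network with no hidden layer) \[ \mathcal{F}^{(I)}_\mathcal{W}=\{(\mathbf{x},\mathbf{r})\mapsto\langle\mathbf{w},\mathbf{x}\odot\mathbf{r}\rangle\colon\mathbf{w}\in\mathcal{W}\},\quad \mathcal{F}^{(II)}_\mathcal{W}=\{(\mathbf{x},\mathbf{r})\mapsto\langle\mathbf{w}\odot\mathbf{r},\mathbf{x}\rangle\colon\mathbf{w}\in\mathcal{W}\}, \] \[ \mathcal{F}^{(III)}_\mathcal{W}=\{(\mathbf{x},(\mathbf{r}_1,\mathbf{r}_2))\mapsto\langle\mathbf{w}\odot\mathbf{r}_1,\mathbf{x}\odot\mathbf{r}_2\rangle\colon\mathbf{w}\in\mathcal{W}\}, \] where $\mathbf{r},\mathbf{r}_1,\mathbf{r}_2\in\{0,1\}^d$ have i.i.d. Bern$(\rho)$ entries. Then \[ \mathfrak{R}_n(\mathcal{F}^{(I)}_\mathcal{W})=\mathfrak{R}_n(\mathcal{F}^{(II)}_\mathcal{W})\le B_1B_2\sqrt{\rho/n}\quad\text{and}\quad\mathfrak{R}_n(\mathcal{F}^{(III)}_\mathcal{W})\le B_1B_2\rho/\sqrt{n}. \]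
   Context: $\|\cdot\|$ is the Euclidean norm and $\odot$ the entrywise product. Inputs $\mathbf{x}_1,\dots,\mathbf{x}_n$ are drawn i.i.d. from a distribution on $\mathcal{X}$ (the $\mathcal{X}$-marginal of a distribution on $\mathcal{X}\times\mathcal{Y}$), and dropout variables $\mathbf{r}_1,\dots,\mathbf{r}_n$ (each a vector, or pair of vectors, as appropriate to the class) are drawn i.i.d. independently of the inputs with all entries i.i.d. Bern$(\rho)$. For a class $\mathcal{H}$ of functions $h(\mathbf{x},\mathbf{r})$, $\hat{\mathfrak{R}}_n(\mathcal{H},S_n,RS_n)=E_\epsilon[\sup_{h\in\mathcal{H}}\frac1n\sum_{i=1}^n\epsilon_i h(\mathbf{x}_i,\mathbf{r}_i)]$ with $\epsilon_i$ i.i.d. uniform on $\{\pm1\}$, and $\mathfrak{R}_n(\mathcal{H})=E_{S_n,RS_n}[\hat{\mathfrak{R}}_n(\mathcal{H},S_n,RS_n)]$. *)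

From HB Require Import structures.
From mathcomp Require Import all_boot all_order all_algebra.
From mathcomp Require Import all_classical all_reals all_analysis.
Set Implicit Arguments. Unset Strict Implicit. Unset Printing Implicit Defensive.
Import Order.TTheory GRing.Theory Num.Theory.
Local Open Scope classical_set_scope.
Local Open Scope ring_scope.

Section Dropout.
Variable R : realType.

Definition dotv (d : nat) (u v : 'rV[R]_d) : R := \sum_(k < d) u 0 k * v 0 k.
Definition normv (d : nat) (u : 'rV[R]_d) : R := Num.sqrt (dotv u u).
Definition hadamard (d : nat) (u v : 'rV[R]_d) : 'rV[R]_d := \row_k (u 0 k * v 0 k).
Definition maskv (d : nat) (r : {ffun 'I_d -> bool}) : 'rV[R]_d := \row_k (r k)%:R.

Definition bern (rho : R) (b : bool) : R := if b then rho else 1 - rho.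
Definition bern_mask (rho : R) (d : nat) (r : {ffun 'I_d -> bool}) : R :=
  \prod_(k < d) bern rho (r k).
Definition bern_mask2 (rho : R) (d : nat)
  (r : {ffun 'I_d -> bool} * {ffun 'I_d -> bool}) : R :=
  bern_mask rho r.1 * bern_mask rho r.2.

Definition rsign (b : bool) : R := if b then 1 else -1.

(* Empirical Rademacher complexity of the class {h w | w in W}, for a sample
   xs and dropout variables rs: E_eps[ sup_w (1/n) sum_i eps_i h_w(x_i, r_i) ],
   eps uniform on {+-1}^n. *)
Definition emp_rad (RT : Type) (d n : nat)
  (h : 'rV[R]_d -> 'rV[R]_d -> RT -> R) (W : set 'rV[R]_d)
  (xs : 'I_n -> 'rV[R]_d) (rs : 'I_n -> RT) : R :=
  \sum_(eps : {ffun 'I_n -> bool})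
     (2 ^- n) * sup [set (n%:R)^-1 * \sum_(i < n) rsign (eps i) * h w (xs i) (rs i)
                     | w in W].

Definition rad_drop (RT : finType) (wt : RT -> R) (d n : nat)
  (h : 'rV[R]_d -> 'rV[R]_d -> RT -> R) (W : set 'rV[R]_d)
  (xs : 'I_n -> 'rV[R]_d) : R :=
  \sum_(rs : {ffun 'I_n -> RT}) (\prod_(i < n) wt (rs i)) * emp_rad h W xs rs.

Definition hI (d : nat) (w x : 'rV[R]_d) (r : {ffun 'I_d -> bool}) : R :=
  dotv w (hadamard x (maskv r)).
Definition hII (d : nat) (w x : 'rV[R]_d) (r : {ffun 'I_d -> bool}) : R :=
  dotv (hadamard w (maskv r)) x.
Definition hIII (d : nat) (w x : 'rV[R]_d)
  (r : {ffun 'I_d -> bool} * {ffun 'I_d -> bool}) : R :=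
  dotv (hadamard w (maskv r.1)) (hadamard x (maskv r.2)).

End Dropout.

(* The sample S_n = (x_1,...,x_n) as a random element of (R^d)^n on a
   probability space: every coordinate measurable, the x_i mutually
   independent and identically distributed (stated on products of Borel
   sets of coordinates, which form a generating pi-system of the Borel
   sigma-algebra of R^d). *)
Definition sample_measurable {d0 : measure_display} {Om : measurableType d0}
  {R : realType} (d n : nat) (S : Om -> 'I_n -> 'rV[R]_d) : Prop :=
  forall (i : 'I_n) (k : 'I_d), measurable_fun setT (fun om => S om i ord0 k).

Definition sample_iid {d0 : measure_display} {Om : measurableType d0}
  {R : realType} (P : probability Om R) (d n : nat)
  (S : Om -> 'I_n -> 'rV[R]_d) : Prop :=
  (forall B : 'I_n -> 'I_d -> set R, (forall i k, measurable (B i k)) ->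
     P [set om | forall i k, B i k (S om i ord0 k)] =
     (\prod_(i < n) P [set om | forall k, B i k (S om i ord0 k)])%E)
  /\
  (forall B : 'I_d -> set R, (forall k, measurable (B k)) ->
     forall i j : 'I_n,
     P [set om | forall k, B k (S om i ord0 k)] = P [set om | forall k, B k (S om j ord0 k)]).

Definition rademacher {d0 : measure_display} {Om : measurableType d0}
  {R : realType} (P : probability Om R) (RT : finType) (wt : RT -> R) (d n : nat)
  (h : 'rV[R]_d -> 'rV[R]_d -> RT -> R) (W : set 'rV[R]_d)
  (S : Om -> 'I_n -> 'rV[R]_d) : \bar R :=
  (\int[P]_om (rad_drop wt h W (S om))%:E)%E.

From HB Require Import structures.
From mathcomp Require Import all_boot all_order all_algebra.
From mathcomp Require Import all_classical all_reals all_analysis measurable_realfun.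
From mathcomp Require Import ring lra.

Set Implicit Arguments.
Unset Strict Implicit.
Unset Printing Implicit Defensive.
Import Order.TTheory GRing.Theory Num.Theory.
Local Open Scope classical_set_scope.
Local Open Scope ring_scope.

(* Every class is linear in the weight, h_w(x, r) = <w, c(x, r)>.  For a
   fixed sample, dropout pattern and sign vector eps, Cauchy-Schwarz bounds
   the supremum over the ball ||w|| < B1 by (B1/n) ||sum_i eps_i c(x_i, r_i)||;
   Jensen moves the expectation over (r, eps) under the square root, where the
   orthogonality of the Rademacher signs leaves sum_i E_r ||c(x_i, r)||^2.
   This second moment is rho ||x_i||^2 for a single mask and rho^2 ||x_i||^2
   for two independent masks.  The bound holds for every sample. *)

Section ProductWeights.
Variables (R : realType) (I J : finType) (p : J -> R).
Hypothesis p_sum1 : \sum_j p j = 1.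

Lemma sum_prod_weight : \sum_(f : {ffun I -> J}) \prod_l p (f l) = 1.
Proof. by rewrite -(bigA_distr_bigA (fun _ j => p j)) /=; apply: big1. Qed.

Lemma sum_prod_weight_marginal (i : I) (G : J -> R) :
  \sum_(f : {ffun I -> J}) (\prod_l p (f l)) * G (f i) = \sum_j p j * G j.
Proof.
transitivity
  (\sum_(f : {ffun I -> J}) \prod_l (p (f l) * (if l == i then G (f l) else 1))).
  by apply: eq_bigr => f _; rewrite big_split /= -big_mkcond big_pred1_eq.
rewrite -(bigA_distr_bigA (fun l j => p j * (if l == i then G j else 1))) /=.
rewrite (bigD1 i) //= [X in _ * X]big1 ?mulr1.
  by apply: eq_bigr => j _; rewrite eqxx.
by move=> l /negbTE li; under eq_bigr do rewrite li mulr1.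
Qed.

End ProductWeights.

Section Rademacher.
Variables (R : realType) (n : nat).

Lemma sum_rademacher_mass : \sum_(eps : {ffun 'I_n -> bool}) (2 ^- n : R) = 1.
Proof.
transitivity (\sum_(eps : {ffun 'I_n -> bool}) \prod_(l < n) (2^-1 : R)).
  by apply: eq_bigr => eps _; rewrite prodr_const card_ord exprVn.
by apply: (@sum_prod_weight R _ _ (fun _ => 2^-1)); rewrite big_bool /=; field.
Qed.

Lemma rademacher_orth (i j : 'I_n) :
  \sum_(eps : {ffun 'I_n -> bool}) 2 ^- n * (rsign R (eps i) * rsign R (eps j))
  = (i == j)%:R.
Proof.
pose g (l : 'I_n) (b : bool) : R :=
  2^-1 * ((if l == i then rsign R b else 1) * (if l == j then rsign R b else 1)).
transitivity (\sum_(eps : {ffun 'I_n -> bool}) \prod_l g l (eps l)).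
  apply: eq_bigr => eps _; rewrite /g big_split /= big_split /=.
  by rewrite -!big_mkcond !big_pred1_eq prodr_const card_ord exprVn.
rewrite -(bigA_distr_bigA g) /= /g.
have [<-|ij] := eqVneq i j.
  apply: big1 => l _; rewrite big_bool /=.
  by case: (l == i); rewrite /rsign /=; field.
rewrite (bigD1 i) //= big_bool /= eqxx (negbTE ij) /rsign.
by rewrite (_ : _ + _ = 0) ?mul0r //; ring.
Qed.

Lemma rademacher_sum_sqr (d : nat) (u : 'I_n -> 'I_d -> R) :
  \sum_(eps : {ffun 'I_n -> bool}) 2 ^- n *
     \sum_k (\sum_i rsign R (eps i) * u i k) ^+ 2
  = \sum_i \sum_k u i k ^+ 2.
Proof.
under eq_bigr do rewrite mulr_sumr.
rewrite exchange_big [RHS]exchange_big /=; apply: eq_bigr => k _.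
transitivity (\sum_(eps : {ffun 'I_n -> bool}) \sum_i \sum_j
   (2 ^- n * (rsign R (eps i) * rsign R (eps j))) * (u i k * u j k)).
  apply: eq_bigr => eps _; rewrite expr2 big_distrl mulr_sumr /=.
  apply: eq_bigr => i _; rewrite big_distrr mulr_sumr /=.
  by apply: eq_bigr => j _; ring.
rewrite exchange_big /=; apply: eq_bigr => i _.
rewrite exchange_big /= (bigD1 i) //= [X in _ + X]big1 ?addr0.
  by rewrite -big_distrl /= rademacher_orth eqxx mul1r expr2.
by move=> j ji; rewrite -big_distrl /= rademacher_orth eq_sym (negbTE ji) mul0r.
Qed.

End Rademacher.

Section LinearClass.
Variable R : realType.

Lemma cauchy_schwarz_ball (d : nat) (a b : 'I_d -> R) (B : R) :
  0 < B -> Num.sqrt (\sum_k a k * a k) < B ->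
  \sum_k a k * b k <= B * Num.sqrt (\sum_k b k ^+ 2).
Proof.
move=> B0 aB.
set X := \sum_k a k * a k; set Y := \sum_k b k ^+ 2; set Z := \sum_k a k * b k.
have X0 : 0 <= X by apply: sumr_ge0 => k _; rewrite -expr2 sqr_ge0.
have Y0 : 0 <= Y by apply: sumr_ge0 => k _; rewrite sqr_ge0.
have XB : X <= B ^+ 2 by have := sqrtr_ge0 X; have := sqr_sqrtr X0; nra.
set s := Num.sqrt Y.
have sY : s ^+ 2 = Y by rewrite sqr_sqrtr.
have [s_eq0|s_neq0] := eqVneq s 0.
  have b0 k : b k = 0.
    have Y_eq0 : Y = 0 by apply/le_anti; rewrite Y0 andbT -sqrtr_eq0 -/s s_eq0.
    have := @psumr_eq0P _ _ xpredT _ (fun k _ => sqr_ge0 (b k)) Y_eq0 k isT.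
    by move/eqP; rewrite sqrf_eq0 => /eqP.
  by rewrite s_eq0 mulr0 /Z big1 // => k _; rewrite b0 mulr0.
have s_gt0 : 0 < s by rewrite lt_def s_neq0 sqrtr_ge0.
have : 0 <= s ^+ 2 * X - 2 * s * B * Z + B ^+ 2 * Y.
  have -> : s ^+ 2 * X - 2 * s * B * Z + B ^+ 2 * Y =
      \sum_k (s * a k - B * b k) ^+ 2.
    rewrite /X /Z /Y !mulr_sumr -sumrB -big_split /=.
    by apply: eq_bigr => k _; ring.
  by apply: sumr_ge0 => k _; rewrite sqr_ge0.
rewrite -sY => H.
have : 0 <= s ^+ 2 * (B ^+ 2 - X) by rewrite mulr_ge0 ?sqr_ge0 ?subr_ge0.
have : 0 < s * B by rewrite mulr_gt0.
nra.
Qed.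

Lemma mean_le_sqrt_mean_sqr (I : finType) (q a : I -> R) :
  (forall j, 0 <= q j) -> \sum_j q j = 1 ->
  \sum_j q j * a j <= Num.sqrt (\sum_j q j * a j ^+ 2).
Proof.
move=> q0 q1.
have expand_var (m : R) : \sum_j q j * (a j - m) ^+ 2 =
    \sum_j q j * a j ^+ 2 - 2 * m * (\sum_j q j * a j) + m ^+ 2 * \sum_j q j.
  rewrite !mulr_sumr -sumrB -big_split /=.
  by apply: eq_bigr => j _; ring.
set m := \sum_j q j * a j.
have : 0 <= \sum_j q j * (a j - m) ^+ 2.
  by apply: sumr_ge0 => j _; rewrite mulr_ge0 ?sqr_ge0.
rewrite expand_var q1 -/m => H.
apply: (le_trans (ler_norm m)); rewrite -sqrtr_sqr; apply: ler_wsqrtr.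
have : m ^+ 2 = m * m by rewrite expr2.
lra.
Qed.

Variables (RT : Type) (d n : nat) (h : 'rV[R]_d -> 'rV[R]_d -> RT -> R).
Variable c : 'rV[R]_d -> RT -> 'I_d -> R.
Hypothesis h_linear : forall w x r, h w x r = \sum_k w 0 k * c x r k.

Lemma sup_linear_ball_le (B1 : R) (xs : 'I_n -> 'rV[R]_d) (rs : 'I_n -> RT)
    (eps : {ffun 'I_n -> bool}) : 0 < B1 ->
  sup [set n%:R^-1 * \sum_(i < n) rsign R (eps i) * h w (xs i) (rs i)
         | w in [set w : 'rV[R]_d | normv w < B1]]
  <= n%:R^-1 *
     (B1 * Num.sqrt (\sum_k (\sum_i rsign R (eps i) * c (xs i) (rs i) k) ^+ 2)).
Proof.
move=> B1_gt0; apply: ge_sup.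
  exists (n%:R^-1 * \sum_(i < n) rsign R (eps i) * h 0 (xs i) (rs i)).
  exists 0 => //=; rewrite /normv /dotv big1 ?sqrtr0 // => k _.
  by rewrite mxE mul0r.
move=> _ [w /= wB1 <-]; rewrite ler_wpM2l ?invr_ge0 ?ler0n //.
have -> : \sum_(i < n) rsign R (eps i) * h w (xs i) (rs i) =
    \sum_k w 0 k * (\sum_i rsign R (eps i) * c (xs i) (rs i) k).
  under eq_bigr do rewrite h_linear mulr_sumr.
  rewrite exchange_big /=; apply: eq_bigr => k _; rewrite mulr_sumr.
  by apply: eq_bigr => i _; ring.
exact: cauchy_schwarz_ball.
Qed.

End LinearClass.

Section DropoutLinearClass.
Variables (R : realType) (RT : finType) (wt : RT -> R) (d n : nat).
Variables (h : 'rV[R]_d -> 'rV[R]_d -> RT -> R) (c : 'rV[R]_d -> RT -> 'I_d -> R).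
Variable xs : 'I_n -> 'rV[R]_d.
Hypotheses (wt_ge0 : forall r, 0 <= wt r) (wt_sum1 : \sum_r wt r = 1).
Hypothesis h_linear : forall w x r, h w x r = \sum_k w 0 k * c x r k.

Definition drop_sign_weight (p : {ffun 'I_n -> RT} * {ffun 'I_n -> bool}) : R :=
  (\prod_(i < n) wt (p.1 i)) * 2 ^- n.

Definition signed_feature_norm (rs : {ffun 'I_n -> RT}) (eps : {ffun 'I_n -> bool}) : R :=
  Num.sqrt (\sum_k (\sum_i rsign R (eps i) * c (xs i) (rs i) k) ^+ 2).

Lemma drop_sign_weight_ge0 p : 0 <= drop_sign_weight p.
Proof. by rewrite mulr_ge0 ?prodr_ge0 ?invr_ge0 ?exprn_ge0. Qed.

Lemma drop_sign_weight_sum1 : \sum_p drop_sign_weight p = 1.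
Proof.
rewrite -(pair_bigA _ (fun rs eps => drop_sign_weight (rs, eps))) /= /drop_sign_weight.
under eq_bigr do rewrite /= -mulr_sumr sum_rademacher_mass mulr1.
exact: sum_prod_weight.
Qed.

Lemma drop_sign_weight_sum_norm_sqr :
  \sum_p drop_sign_weight p * signed_feature_norm p.1 p.2 ^+ 2 =
  \sum_i \sum_r wt r * \sum_k c (xs i) r k ^+ 2.
Proof.
rewrite -(pair_bigA _ (fun rs eps =>
  drop_sign_weight (rs, eps) * signed_feature_norm rs eps ^+ 2)) /=.
transitivity (\sum_(rs : {ffun 'I_n -> RT}) (\prod_(i < n) wt (rs i)) *
    \sum_i \sum_k c (xs i) (rs i) k ^+ 2).
  apply: eq_bigr => rs _.
  rewrite -(@rademacher_sum_sqr R n d (fun i k => c (xs i) (rs i) k)) mulr_sumr.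
  apply: eq_bigr => eps _; rewrite /drop_sign_weight sqr_sqrtr ?mulrA //.
  by apply: sumr_ge0 => k _; rewrite sqr_ge0.
under [LHS]eq_bigr do rewrite mulr_sumr.
rewrite exchange_big /=; apply: eq_bigr => i _.
exact: (sum_prod_weight_marginal wt_sum1 i (fun r => \sum_k c (xs i) r k ^+ 2)).
Qed.

Lemma rad_drop_le_mean_norm (B1 : R) : 0 < B1 ->
  rad_drop wt h [set w | normv w < B1] xs <=
  n%:R^-1 * B1 * \sum_p drop_sign_weight p * signed_feature_norm p.1 p.2.
Proof.
move=> B1_gt0; rewrite /rad_drop.
rewrite -(pair_bigA _ (fun rs eps =>
  drop_sign_weight (rs, eps) * signed_feature_norm rs eps)) /=.
rewrite mulr_sumr; apply: ler_sum => rs _.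
rewrite /emp_rad !mulr_sumr; apply: ler_sum => eps _.
have wt_rs_ge0 : 0 <= \prod_(i < n) wt (rs i) by apply: prodr_ge0.
have mass_ge0 : 0 <= (2 ^- n : R) by rewrite invr_ge0 exprn_ge0.
apply: le_trans (ler_wpM2l wt_rs_ge0 (ler_wpM2l mass_ge0
  (sup_linear_ball_le h_linear xs rs eps B1_gt0))) _.
by rewrite /drop_sign_weight /signed_feature_norm /= le_eqVlt; apply/orP; left; apply/eqP; ring.
Qed.

Lemma rad_drop_linear_le (B1 K : R) : (0 < n)%N -> 0 < B1 ->
  (forall i, \sum_r wt r * \sum_k c (xs i) r k ^+ 2 <= K) ->
  rad_drop wt h [set w | normv w < B1] xs <= B1 * Num.sqrt (K / n%:R).
Proof.
move=> n_gt0 B1_gt0 momentK.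
apply: le_trans (rad_drop_le_mean_norm B1_gt0) _.
have -> : K / n%:R = n%:R^-1 ^+ 2 * (n%:R * K) by field; rewrite pnatr_eq0 -lt0n.
rewrite sqrtrM ?sqr_ge0 // sqrtr_sqr ger0_norm ?invr_ge0 ?ler0n // mulrCA -mulrA.
rewrite ler_wpM2l ?invr_ge0 ?ler0n //; apply: ler_wpM2l; first exact: ltW.
apply: le_trans (mean_le_sqrt_mean_sqr _ drop_sign_weight_ge0 drop_sign_weight_sum1) _.
rewrite ler_wsqrtr // drop_sign_weight_sum_norm_sqr.
rewrite (le_trans (ler_sum _ (fun i _ => momentK i))) //.
by rewrite sumr_const card_ord mulr_natl.
Qed.

End DropoutLinearClass.

Section Masks.
Variable R : realType.

Lemma masked_second_moment_le (RT : finType) (wt : RT -> R) (d : nat)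
    (m : RT -> 'I_d -> R) (s B2 : R) (x : 'rV[R]_d) :
  0 <= s -> (forall k, \sum_r wt r * m r k ^+ 2 = s) -> normv x <= B2 ->
  \sum_r wt r * \sum_k (x 0 k * m r k) ^+ 2 <= s * B2 ^+ 2.
Proof.
move=> s_ge0 moment_m xB2.
have -> : \sum_r wt r * \sum_k (x 0 k * m r k) ^+ 2 = s * \sum_k x 0 k * x 0 k.
  under eq_bigr do rewrite mulr_sumr.
  rewrite exchange_big mulr_sumr /=; apply: eq_bigr => k _.
  by rewrite -(moment_m k) mulr_suml; apply: eq_bigr => r _; ring.
rewrite ler_wpM2l //.
have sum_ge0 : 0 <= \sum_k x 0 k * x 0 k.
  by apply: sumr_ge0 => k _; rewrite -expr2 sqr_ge0.
have := sqrtr_ge0 (\sum_k x 0 k * x 0 k); have := sqr_sqrtr sum_ge0.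
by move: xB2; rewrite /normv /dotv; nra.
Qed.

Lemma rad_drop_masked_le (RT : finType) (wt : RT -> R) (d n : nat)
    (h : 'rV[R]_d -> 'rV[R]_d -> RT -> R) (m : RT -> 'I_d -> R)
    (B1 B2 s : R) (xs : 'I_n -> 'rV[R]_d) :
  (0 < n)%N -> 0 < B1 -> 0 <= s -> (forall r, 0 <= wt r) -> \sum_r wt r = 1 ->
  (forall k, \sum_r wt r * m r k ^+ 2 = s) ->
  (forall w x r, h w x r = \sum_k w 0 k * (x 0 k * m r k)) ->
  (forall i, normv (xs i) <= B2) ->
  rad_drop wt h [set w | normv w < B1] xs <= B1 * Num.sqrt (s * B2 ^+ 2 / n%:R).
Proof.
move=> n_gt0 B1_gt0 s_ge0 wt_ge0 wt_sum1 moment_m h_masked xsB2.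
apply: (rad_drop_linear_le wt_ge0 wt_sum1 h_masked) => // i.
exact: masked_second_moment_le.
Qed.

Lemma bern_sum1 (rho : R) : \sum_b bern rho b = 1.
Proof. by rewrite big_bool /=; ring. Qed.

Variables (rho : R) (d : nat).

Lemma bern_mask_ge0 (r : {ffun 'I_d -> bool}) : 0 <= rho <= 1 -> 0 <= bern_mask rho r.
Proof.
move=> /andP[rho_ge0 rho_le1]; apply: prodr_ge0 => k _; rewrite /bern.
by case: (r k); rewrite ?subr_ge0.
Qed.

Lemma bern_mask_sum1 : \sum_(r : {ffun 'I_d -> bool}) bern_mask rho r = 1.
Proof. exact: sum_prod_weight (bern_sum1 rho). Qed.

Lemma bern_mask_sqr_coord (k : 'I_d) :
  \sum_(r : {ffun 'I_d -> bool}) bern_mask rho r * (r k)%:R ^+ 2 = rho.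
Proof.
rewrite (sum_prod_weight_marginal (bern_sum1 rho) k (fun b => (b%:R : R) ^+ 2)).
by rewrite big_bool /=; ring.
Qed.

Lemma bern_mask2_ge0 (r : {ffun 'I_d -> bool} * {ffun 'I_d -> bool}) :
  0 <= rho <= 1 -> 0 <= bern_mask2 rho r.
Proof. by move=> rho01; rewrite mulr_ge0 ?bern_mask_ge0. Qed.

Lemma bern_mask2_sum1 :
  \sum_(r : {ffun 'I_d -> bool} * {ffun 'I_d -> bool}) bern_mask2 rho r = 1.
Proof.
rewrite -(pair_bigA _ (fun r1 r2 => bern_mask rho r1 * bern_mask rho r2)) /=.
by rewrite -big_distrlr /= bern_mask_sum1 mulr1.
Qed.

Lemma bern_mask2_sqr_coord (k : 'I_d) :
  \sum_(r : {ffun 'I_d -> bool} * {ffun 'I_d -> bool})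
    bern_mask2 rho r * ((r.1 k)%:R * (r.2 k)%:R) ^+ 2 = rho ^+ 2.
Proof.
transitivity ((\sum_(r : {ffun 'I_d -> bool}) bern_mask rho r * (r k)%:R ^+ 2) *
  (\sum_(r : {ffun 'I_d -> bool}) bern_mask rho r * (r k)%:R ^+ 2)); last first.
  by rewrite bern_mask_sqr_coord expr2.
rewrite big_distrlr pair_bigA /=; apply: eq_bigr => -[r1 r2] _.
by rewrite /bern_mask2 /=; ring.
Qed.

End Masks.

Import HBNNSimple.

(* No measurability of [f] is required: the positive part of the integral is a
   supremum over simple functions below [f], each of them below [C]. *)
Lemma probability_integral_le (R : realType) (d0 : measure_display)
    (Om : measurableType d0) (P : probability Om R) (f : Om -> R) (C : R) :
  0 <= C -> (forall x, f x <= C) -> (\int[P]_x (f x)%:E <= C%:E)%E.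
Proof.
move=> C_ge0 fC; rewrite /integral.
apply: (@le_trans _ _ (C%:E - 0%E)%E); last by rewrite sube0.
apply: leeB; last first.
  apply: ereal_sup_ubound => /=; exists nnsfun0; last exact: sintegral0.
  by move=> x; rewrite funeneg_ge0.
apply: ge_ereal_sup => _ [g /= g_le <-].
have -> : sintegral P g = (\int[P]_(x in setT) (g x)%:E)%E.
  rewrite integral_nnsfun //; congr sintegral; apply/funext => x.
  by rewrite /restrict /patch in_setT.
have -> : C%:E = (\int[P]_(x in setT) (cst C%:E) x)%E.
  rewrite integral_cst // [X in (_ * X)%E](_ : _ = 1%E) ?mule1 //; exact: probability_setT.
apply: ge0_le_integral => //.
- by move=> x _; rewrite lee_fin fun_ge0.
- by apply/measurable_EFinP; exact: measurable_funP.
- move=> x _; apply: le_trans (g_le x) _.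
  by rewrite funeposE /restrict /patch in_setT ge_max !lee_fin fC C_ge0.
Qed.

Theorem theorem2 (R : realType) (d0 : measure_display) (Om : measurableType d0)
  (P : probability Om R) (d n : nat) (B1 B2 rho : R)
  (S : Om -> 'I_n -> 'rV[R]_d) :
  (0 < n)%N -> 0 < B1 -> 0 < B2 -> 0 <= rho <= 1 ->
  sample_measurable S -> sample_iid P S ->
  (forall om i, normv (S om i) <= B2) ->
  let W := [set w : 'rV[R]_d | normv w < B1] in
  rademacher P (bern_mask rho (d:=d)) (@hI R d) W S
    = rademacher P (bern_mask rho (d:=d)) (@hII R d) W S /\
  (rademacher P (bern_mask rho (d:=d)) (@hI R d) W S
    <= (B1 * B2 * Num.sqrt (rho / n%:R))%:E)%E /\
  (rademacher P (bern_mask2 rho (d:=d)) (@hIII R d) W S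
    <= (B1 * B2 * rho / Num.sqrt n%:R)%:E)%E.
Proof.
move=> n_gt0 B1_gt0 B2_gt0 rho01 _ _ SB2 W.
have /andP[rho_ge0 _] := rho01.
have hI_hII : @hI R d = @hII R d.
  apply/funext => w; apply/funext => x; apply/funext => r.
  by rewrite /hI /hII /dotv; apply: eq_bigr => k _; rewrite !mxE; ring.
have sqrt_B2 (a : R) : Num.sqrt (a * B2 ^+ 2 / n%:R) = B2 * Num.sqrt (a / n%:R).
  by rewrite mulrAC mulrC sqrtrM ?sqr_ge0 // sqrtr_sqr ger0_norm ?ltW.
split; first by rewrite hI_hII.
split; apply: probability_integral_le => [|om].
- by rewrite !mulr_ge0 ?sqrtr_ge0 ?ltW.
- rewrite -mulrA -sqrt_B2.
  apply: (@rad_drop_masked_le R _ _ d n (@hI R d) (fun r k => (r k)%:R)) => //.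
  + by move=> r; apply: bern_mask_ge0.
  + exact: bern_mask_sum1.
  + exact: bern_mask_sqr_coord.
  + by move=> w x r; apply: eq_bigr => k _; rewrite !mxE.
- by rewrite !mulr_ge0 ?invr_ge0 ?sqrtr_ge0 // ltW.
- have -> : B1 * B2 * rho / Num.sqrt n%:R = B1 * Num.sqrt (rho ^+ 2 * B2 ^+ 2 / n%:R).
    rewrite sqrt_B2 sqrtrM ?sqr_ge0 // sqrtr_sqr ger0_norm // sqrtrV ?ler0n //.
    by rewrite !mulrA.
  apply: (@rad_drop_masked_le R _ _ d n (@hIII R d) (fun r k => (r.1 k)%:R * (r.2 k)%:R)) => //.
  + by rewrite sqr_ge0.
  + by move=> r; apply: bern_mask2_ge0.
  + exact: bern_mask2_sum1.
  + exact: bern_mask2_sqr_coord.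
  + by move=> w x r; apply: eq_bigr => k _; rewrite !mxE; ring.
Qed.
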